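(* Let $k\in\mathbb{R}$, $a_1>0$, $c>0$ and $\gamma\ge 1$ be fixed, with $k\neq 0$ and $c^2\neq k^2a_1^2$, and let $c(k)$ denote a fixed (possibly complex) square root of $c^2-k^2a_1^2$ (so $c(k)\neq 0$). For $Pr>0$ consider the complex polynomial $$P(X)= X^{3} + 2\,i\,k\,a_1 \left( 1+\frac{3\,\gamma}{4\,Pr} \right)X^{2} - \left(c^{2} + \frac{3\,\gamma}{Pr}a_1^2\,k^2\right)X - i\,\frac{3\,k\,a_1\,c^2}{2\,Pr}.$$ Then, as $Pr\to\infty$ (all other parameters fixed), the three roots $X^{(-)}_{Pr},X^{(0)}_{Pr},X^{(+)}_{Pr}$ of $P$ depend smoothly on $1/Pr$ and satisfy $$X_{Pr}^{(\mp)}=-ik\,a_1 \mp c(k) \mp\frac{3\,(\gamma-1)\,k\,a_1\,(k\,a_1\pm i\,c(k))}{4\,c(k)}\frac{1}{Pr}+\mathcal{O}\!\left(\frac{1}{Pr^2}\right),$$ $$X_{Pr}^{(0)}=-i\,\frac{3\,k\,a_1}{2\,Pr}+\mathcal{O}\!\left(\frac{1}{Pr^2}\right).$$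
   Context: This polynomial is the dispersion relation $P(\omega/k)=0$ of the linearized 1D compressible Navier–Stokes equations, where $a_1=2\mu/(3\rho)$ ($\mu$ viscosity, $\rho$ density), $c$ is the adiabatic speed of sound, $\gamma=C_p/C_v$, and $Pr=\mu C_p/\lambda$ is the Prandtl number. In the formula for $X^{(\mp)}_{Pr}$, the upper signs give $X^{(-)}_{Pr}$ and the lower signs give $X^{(+)}_{Pr}$. *)

From Stdlib Require Import Reals.
From Coquelicot Require Import Coquelicot.

Open Scope C_scope.

Definition Pdisp (k a1 c gamma Pr : R) (X : C) : C :=
  X ^ 3
  + 2 * Ci * RtoC k * RtoC a1 * (1 + 3 * RtoC gamma / (4 * RtoC Pr)) * X ^ 2
  - (RtoC c ^ 2 + 3 * RtoC gamma / RtoC Pr * RtoC a1 ^ 2 * RtoC k ^ 2) * X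
  - Ci * (3 * RtoC k * RtoC a1 * RtoC c ^ 2 / (2 * RtoC Pr)).

Definition smooth_on (f : R -> R) (a b : R) : Prop :=
  forall (n : nat) (x : R), (a < x < b)%R -> ex_derive_n f n x.

Definition Csmooth_on (f : R -> C) (a b : R) : Prop :=
  smooth_on (fun x => Re (f x)) a b /\ smooth_on (fun x => Im (f x)) a b.

(* Write eps = 1/Pr and p = k a1.  The substitution X = -i Y turns P into i Q(eps, Y), where
   Q(eps, Y) = Y (Y^2 - 2 p Y + c^2) + eps (...) is a real cubic.  On a small box around
   (0, 0) the divided difference of Q(eps, .) stays above c^2/2, so Q(eps, .) has exactly one
   small real root Y0(eps), obtained from the intermediate value theorem; the same divided
   difference gives the implicit-function formula Y0' = - dQ/deps / dQ/dY, from which Y0 is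
   C^n for every n by induction.  Dividing P by X + i Y0 leaves a quadratic with discriminant
   (c^2 - p^2) u(eps), u(0) = 4, whose roots (-i beta +- c(k) sqrt u)/2 are therefore smooth
   near 0.  The expansions follow from Y0 = 3/2 p eps + O(eps^2), read off Q(eps, Y0) = 0, and
   sqrt u = 2 + rho1 eps + O(eps^2). *)

From Stdlib Require Import Reals Lra Psatz Lia FunctionalExtensionality ClassicalEpsilon.
From Coquelicot Require Import Coquelicot.
Open Scope R_scope.

Fixpoint Cn_on (n : nat) (f : R -> R) (a b : R) : Prop :=
  match n with
  | O => True
  | S m => (forall x, a < x < b -> ex_derive f x) /\ Cn_on m (Derive f) a b
  end.

Lemma locally_open_interval a b x : a < x < b -> locally x (fun y => a < y < b).
Proof.
  intros Hx. apply (open_and (fun y => a < y) (fun y => y < b)); auto.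
  - apply open_gt.
  - apply open_lt.
Qed.

Lemma Cn_on_ext n : forall f g a b,
  (forall x, a < x < b -> f x = g x) -> Cn_on n f a b -> Cn_on n g a b.
Proof.
  induction n as [|n IH]; simpl; auto.
  intros f g a b Efg [Hf HDf].
  assert (Eloc : forall x, a < x < b -> locally x (fun y => f y = g y)).
  { intros x Hx. apply (filter_imp (fun y => a < y < b)); auto.
    apply locally_open_interval; auto. }
  split.
  - intros x Hx. apply ex_derive_ext_loc with f; auto.
  - apply IH with (Derive f); auto. intros x Hx. apply Derive_ext_loc; auto.
Qed.

Lemma Cn_on_S n f a b : Cn_on (S n) f a b -> Cn_on n f a b.
Proof.
  revert f. induction n as [|n IH]; simpl; auto.
  intros f [Hf [HDf HDDf]]. split; auto. apply IH. simpl. auto.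
Qed.

Lemma Cn_on_subinterval n : forall f a b a' b',
  a <= a' -> b' <= b -> Cn_on n f a b -> Cn_on n f a' b'.
Proof.
  induction n as [|n IH]; simpl; auto.
  intros f a b a' b' Ha Hb [Hf HDf]. split.
  - intros x Hx. apply Hf. lra.
  - eapply IH; eauto.
Qed.

Lemma Cn_on_const n : forall (k a b : R), Cn_on n (fun _ => k) a b.
Proof.
  induction n as [|n IH]; simpl; auto.
  intros k a b. split.
  - intros. apply ex_derive_const.
  - apply Cn_on_ext with (fun _ => 0); auto.
    intros x _. rewrite Derive_const. reflexivity.
Qed.

Lemma Cn_on_id n a b : Cn_on n (fun x => x) a b.
Proof.
  destruct n as [|n]; simpl; auto. split.
  - intros. apply ex_derive_id.
  - apply Cn_on_ext with (fun _ => 1).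
    + intros x _. rewrite Derive_id. reflexivity.
    + apply Cn_on_const.
Qed.

Lemma Cn_on_plus n : forall f g a b,
  Cn_on n f a b -> Cn_on n g a b -> Cn_on n (fun x => f x + g x) a b.
Proof.
  induction n as [|n IH]; simpl; auto.
  intros f g a b [Hf HDf] [Hg HDg]. split.
  - intros x Hx. apply (ex_derive_plus f g); auto.
  - apply Cn_on_ext with (fun x => Derive f x + Derive g x); auto.
    intros x Hx. rewrite Derive_plus; auto.
Qed.

Lemma Cn_on_opp n : forall f a b, Cn_on n f a b -> Cn_on n (fun x => - f x) a b.
Proof.
  induction n as [|n IH]; simpl; auto.
  intros f a b [Hf HDf]. split.
  - intros x Hx. apply (ex_derive_opp f); auto.
  - apply Cn_on_ext with (fun x => - Derive f x); auto.
    intros x Hx. rewrite Derive_opp; auto.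
Qed.

Lemma Cn_on_minus n f g a b :
  Cn_on n f a b -> Cn_on n g a b -> Cn_on n (fun x => f x - g x) a b.
Proof. intros Hf Hg. apply Cn_on_plus; auto. apply Cn_on_opp; auto. Qed.

Lemma Cn_on_mult n : forall f g a b,
  Cn_on n f a b -> Cn_on n g a b -> Cn_on n (fun x => f x * g x) a b.
Proof.
  induction n as [|n IH]; simpl; auto.
  intros f g a b [Hf HDf] [Hg HDg]. split.
  - intros x Hx. apply (ex_derive_mult f g); auto.
  - apply Cn_on_ext with (fun x => Derive f x * g x + f x * Derive g x).
    + intros x Hx. rewrite Derive_mult; auto.
    + apply Cn_on_plus; apply IH; auto; apply Cn_on_S; simpl; auto.
Qed.

Lemma Cn_on_inv n : forall f a b,
  (forall x, a < x < b -> f x <> 0) -> Cn_on n f a b -> Cn_on n (fun x => / f x) a b.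
Proof.
  induction n as [|n IH]; simpl; auto.
  intros f a b Hf0 [Hf HDf]. split.
  - intros x Hx. apply ex_derive_inv; auto.
  - assert (Hfn : Cn_on n f a b) by (apply Cn_on_S; simpl; auto).
    apply Cn_on_ext with (fun x => - (Derive f x * (/ f x * / f x))).
    + intros x Hx. rewrite Derive_inv; auto. field. auto.
    + apply Cn_on_opp, Cn_on_mult; auto. apply Cn_on_mult; apply IH; auto.
Qed.

Lemma Cn_on_div n f g a b : (forall x, a < x < b -> g x <> 0) ->
  Cn_on n f a b -> Cn_on n g a b -> Cn_on n (fun x => f x / g x) a b.
Proof. intros. apply Cn_on_mult; auto. apply Cn_on_inv; auto. Qed.

Lemma Cn_on_sqrt n : forall f a b,
  (forall x, a < x < b -> 0 < f x) -> Cn_on n f a b -> Cn_on n (fun x => sqrt (f x)) a b.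
Proof.
  induction n as [|n IH]; simpl; auto.
  intros f a b Hpos [Hf HDf].
  assert (Hsqrt : forall x, a < x < b -> is_derive (fun x => sqrt (f x)) x (Derive f x / (2 * sqrt (f x)))).
  { intros x Hx. apply is_derive_sqrt; auto. apply Derive_correct; auto. }
  split.
  - intros x Hx. eexists. apply Hsqrt; auto.
  - assert (Hfn : Cn_on n f a b) by (apply Cn_on_S; simpl; auto).
    apply Cn_on_ext with (fun x => Derive f x / (2 * sqrt (f x))).
    + intros x Hx. symmetry. apply is_derive_unique, Hsqrt; auto.
    + apply Cn_on_div; auto.
      * intros x Hx. specialize (sqrt_lt_R0 _ (Hpos x Hx)). lra.
      * apply Cn_on_mult; auto. apply Cn_on_const.
Qed.

Lemma Cn_on_ex_derive_n n : forall f a b,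
  Cn_on (S n) f a b -> forall x, a < x < b -> ex_derive (Derive_n f n) x.
Proof.
  induction n as [|n IH]; intros f a b Hf x Hx.
  - apply Hf; auto.
  - assert (E : Derive_n f (S n) = Derive_n (Derive f) n).
    { apply functional_extensionality. intros y.
      replace (S n) with (n + 1)%nat by lia. rewrite <- (Derive_n_comp f n 1). reflexivity. }
    rewrite E. apply IH with a b; auto. apply Hf.
Qed.

Lemma smooth_on_of_Cn_on f a b : (forall n, Cn_on n f a b) -> smooth_on f a b.
Proof.
  intros Hf [|n] x Hx; simpl; auto.
  apply Cn_on_ex_derive_n with a b; auto.
Qed.

Ltac Cn_on_close :=
  repeat match goal with
  | |- _ => assumption
  | |- Cn_on _ (fun _ => ?k) _ _ => apply Cn_on_const
  | |- Cn_on _ (fun x => x) _ _ => apply Cn_on_id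
  | |- Cn_on ?n (Rplus ?u) ?a ?b => change (Cn_on n (fun x => Rplus u x) a b)
  | |- Cn_on ?n (Rmult ?u) ?a ?b => change (Cn_on n (fun x => Rmult u x) a b)
  | |- Cn_on _ (fun _ => Rplus _ _) _ _ => apply Cn_on_plus
  | |- Cn_on _ (fun _ => Rminus _ _) _ _ => apply Cn_on_minus
  | |- Cn_on _ (fun _ => Ropp _) _ _ => apply Cn_on_opp
  | |- Cn_on _ (fun _ => Rmult _ _) _ _ => apply Cn_on_mult
  | |- Cn_on _ (fun _ => Rdiv _ _) _ _ => unfold Rdiv
  end.

Definition bigO_on (d : R) (m : nat) (f : R -> R) : Prop :=
  exists M, forall e, 0 < e < d -> Rabs (f e) <= M * e ^ m.

Lemma bigO_on_ext d m f g :
  (forall e, 0 < e < d -> f e = g e) -> bigO_on d m f -> bigO_on d m g.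
Proof. intros E [M H]. exists M. intros e He. rewrite <- E; auto. Qed.

Lemma bigO_on_le d d' m f : d' <= d -> bigO_on d m f -> bigO_on d' m f.
Proof. intros Hd [M H]. exists M. intros e He. apply H. lra. Qed.

Lemma bigO_on_plus d m f g :
  bigO_on d m f -> bigO_on d m g -> bigO_on d m (fun e => f e + g e).
Proof.
  intros [M1 H1] [M2 H2]. exists (M1 + M2). intros e He.
  specialize (H1 e He). specialize (H2 e He).
  eapply Rle_trans; [apply Rabs_triang | lra].
Qed.

Lemma bigO_on_opp d m f : bigO_on d m f -> bigO_on d m (fun e => - f e).
Proof. intros [M H]. exists M. intros e He. rewrite Rabs_Ropp. auto. Qed.

Lemma bigO_on_minus d m f g :
  bigO_on d m f -> bigO_on d m g -> bigO_on d m (fun e => f e - g e).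
Proof. intros. apply bigO_on_plus; auto. apply bigO_on_opp; auto. Qed.

Lemma bigO_on_mult d m n f g :
  bigO_on d m f -> bigO_on d n g -> bigO_on d (m + n) (fun e => f e * g e).
Proof.
  intros [M1 H1] [M2 H2]. exists (M1 * M2). intros e He.
  specialize (H1 e He). specialize (H2 e He).
  rewrite Rabs_mult, pow_add.
  replace (M1 * M2 * (e ^ m * e ^ n)) with ((M1 * e ^ m) * (M2 * e ^ n)) by ring.
  apply Rmult_le_compat; auto; apply Rabs_pos.
Qed.

Lemma bigO_on_const d k : bigO_on d 0 (fun _ => k).
Proof. exists (Rabs k). intros. simpl. lra. Qed.

Lemma bigO_on_id d : bigO_on d 1 (fun e => e).
Proof. exists 1. intros e He. simpl. rewrite Rabs_right; lra. Qed.

Lemma bigO_on_S d m f : d <= 1 -> bigO_on d (S m) f -> bigO_on d m f.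
Proof.
  intros Hd [M H]. exists (Rabs M). intros e He.
  assert (0 < e ^ m) by (apply pow_lt; lra).
  specialize (H e He). simpl in H.
  assert (M * (e * e ^ m) <= Rabs M * e ^ m).
  { assert (M * (e * e ^ m) <= Rabs M * (e * e ^ m))
      by (apply Rmult_le_compat_r; [nra | apply Rle_abs]).
    assert (0 <= Rabs M * e ^ m) by (apply Rmult_le_pos; [apply Rabs_pos | lra]).
    nra. }
  lra.
Qed.

Lemma bigO_on_inv d f r : 0 < r ->
  (forall e, 0 < e < d -> r <= Rabs (f e)) -> bigO_on d 0 (fun e => / f e).
Proof.
  intros Hr Hf. exists (/ r). intros e He. specialize (Hf e He). simpl.
  rewrite Rmult_1_r, Rabs_inv. apply Rinv_le_contravar; auto.
Qed.

Ltac bigO0_close :=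
  repeat match goal with
  | |- _ => assumption
  | |- bigO_on _ 0 (fun _ => ?k) => apply bigO_on_const
  | |- bigO_on _ 0 (fun x => x) => apply bigO_on_S; [assumption | apply bigO_on_id]
  | |- bigO_on ?d 0 (Rplus ?u) => change (bigO_on d 0 (fun x => Rplus u x))
  | |- bigO_on ?d 0 (Rmult ?u) => change (bigO_on d 0 (fun x => Rmult u x))
  | |- bigO_on _ 0 (fun _ => Rplus _ _) => apply bigO_on_plus
  | |- bigO_on _ 0 (fun _ => Rminus _ _) => apply bigO_on_minus
  | |- bigO_on _ 0 (fun _ => Ropp _) => apply bigO_on_opp
  | |- bigO_on _ 0 (fun _ => Rmult _ _) => apply (bigO_on_mult _ 0 0)
  | |- bigO_on _ 0 (fun _ => Rdiv _ _) => unfold Rdiv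
  end.

Lemma bigO_on_Cmod_comb d m (z w : C) u v : bigO_on d m u -> bigO_on d m v ->
  bigO_on d m (fun e => Cmod (z * RtoC (u e) + w * RtoC (v e))).
Proof.
  intros [M1 H1] [M2 H2]. exists (Cmod z * M1 + Cmod w * M2). intros e He.
  specialize (H1 e He). specialize (H2 e He).
  rewrite Rabs_pos_eq by apply Cmod_ge_0.
  eapply Rle_trans; [apply Cmod_triangle |].
  rewrite !Cmod_mult, !Cmod_R.
  assert (0 <= Cmod z) by apply Cmod_ge_0. assert (0 <= Cmod w) by apply Cmod_ge_0.
  assert (Cmod z * Rabs (u e) <= Cmod z * (M1 * e ^ m)) by (apply Rmult_le_compat_l; auto).
  assert (Cmod w * Rabs (v e) <= Cmod w * (M2 * e ^ m)) by (apply Rmult_le_compat_l; auto).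
  nra.
Qed.

Lemma bigO_on_common d m f g h :
  bigO_on d m f -> bigO_on d m g -> bigO_on d m h -> exists M, forall e, 0 < e < d ->
  Rabs (f e) <= M * e ^ m /\ Rabs (g e) <= M * e ^ m /\ Rabs (h e) <= M * e ^ m.
Proof.
  intros [M1 H1] [M2 H2] [M3 H3]. exists (Rabs M1 + Rabs M2 + Rabs M3). intros e He.
  specialize (H1 e He). specialize (H2 e He). specialize (H3 e He).
  assert (0 <= e ^ m) by (apply pow_le; lra).
  assert (Hle : forall Mi, Mi <= Rabs M1 + Rabs M2 + Rabs M3 -> Mi * e ^ m <= (Rabs M1 + Rabs M2 + Rabs M3) * e ^ m)
    by (intros; apply Rmult_le_compat_r; auto).
  pose proof (Rle_abs M1). pose proof (Rle_abs M2). pose proof (Rle_abs M3).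
  pose proof (Rabs_pos M1). pose proof (Rabs_pos M2). pose proof (Rabs_pos M3).
  split; [|split]; eapply Rle_trans; eauto; apply Hle; lra.
Qed.

Lemma is_derive_of_slope f x q r : 0 < r ->
  (forall h, Rabs h < r -> f (x + h) - f x = h * q h) ->
  continuous q 0 -> is_derive f x (q 0).
Proof.
  intros Hr Hf Hq. apply is_derive_Reals. intros eps Heps.
  apply continuity_pt_filterlim in Hq. destruct (Hq eps Heps) as [alp [Halp H]].
  exists (mkposreal _ (Rmin_stable_in_posreal (mkposreal _ Hr) (mkposreal _ Halp))).
  simpl. intros h Hh0 Hh.
  assert (Rabs h < r) by (eapply Rlt_le_trans; [apply Hh | apply Rmin_l]).
  assert (Rabs h < alp) by (eapply Rlt_le_trans; [apply Hh | apply Rmin_r]).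
  rewrite Hf by auto. replace (h * q h / h) with (q h) by (field; auto).
  apply H. split; [split; [exact I | auto] |].
  simpl. unfold R_dist. rewrite Rminus_0_r. auto.
Qed.

Lemma continuous_of_lipschitz f x L r : 0 < r ->
  (forall h, Rabs h < r -> Rabs (f (x + h) - f x) <= L * Rabs h) ->
  continuous (fun h => f (x + h)) 0.
Proof.
  intros Hr Hf. apply continuity_pt_filterlim. intros eps Heps.
  assert (HL : 0 < Rabs L + 1) by (pose proof (Rabs_pos L); lra).
  exists (Rmin r (eps / (Rabs L + 1))). split.
  { apply Rmin_glb_lt; auto. apply Rdiv_lt_0_compat; auto. }
  intros h [_ Hh]. simpl in *. unfold R_dist in *.
  rewrite Rminus_0_r in Hh. rewrite Rplus_0_r.
  assert (Rabs h < r) by (eapply Rlt_le_trans; [apply Hh | apply Rmin_l]).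
  assert (Hh' : Rabs h < eps / (Rabs L + 1)) by (eapply Rlt_le_trans; [apply Hh | apply Rmin_r]).
  apply Rmult_lt_compat_r with (r := Rabs L + 1) in Hh'; auto.
  replace (eps / (Rabs L + 1) * (Rabs L + 1)) with eps in Hh' by (field; lra).
  eapply Rle_lt_trans; [apply Hf; auto |].
  pose proof (Rabs_pos h). pose proof (Rle_abs L). nra.
Qed.

Lemma Csmooth_on_comb (z w : C) u v a b :
  (forall n, Cn_on n u a b) -> (forall n, Cn_on n v a b) ->
  Csmooth_on (fun x => z * RtoC (u x) + w * RtoC (v x))%C a b.
Proof.
  intros Hu Hv. split; apply smooth_on_of_Cn_on; intros n;
    specialize (Hu n); specialize (Hv n).
  - apply Cn_on_ext with (fun x => Re z * u x + Re w * v x).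
    + intros x _. unfold Re, Im. simpl. ring.
    + Cn_on_close.
  - apply Cn_on_ext with (fun x => Im z * u x + Im w * v x).
    + intros x _. unfold Re, Im. simpl. ring.
    + Cn_on_close.
Qed.

Lemma Pdisp_inv k a1 c g e X : e <> 0 ->
  Pdisp k a1 c g (/ e) X =
  (X ^ 3 + Ci * RtoC (2 * (k * a1) * (1 + 3 * g * e / 4)) * X ^ 2
   - RtoC (c * c + 3 * g * e * (k * a1) * (k * a1)) * X
   - Ci * RtoC (3 / 2 * (k * a1) * c * c * e))%C.
Proof.
  intros He. unfold Pdisp. destruct X as [x y].
  apply injective_projections; simpl; field; auto.
Qed.

Lemma cubic_factor (X s : C) (b y C2 t : R) :
  (s * s)%C = RtoC (4 * C2 - b * (b + 4 * y)) -> y * (C2 - y * b) = t ->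
  (X ^ 3 + Ci * RtoC (b + y) * X ^ 2 - RtoC C2 * X - Ci * RtoC t)%C =
  ((X - (- Ci * RtoC b - s) / 2) * (X - - Ci * RtoC y) * (X - (- Ci * RtoC b + s) / 2))%C.
Proof.
  intros Hs Ht.
  transitivity ((X + Ci * RtoC y) *
    (X * X + Ci * RtoC b * X + (Ci * Ci * RtoC b * RtoC b - s * s) / 4))%C.
  - rewrite Hs, <- Ht. destruct X as [x1 x2].
    apply injective_projections; simpl; field.
  - field.
Qed.

Section Dispersion.

Variables p c g : R.
Hypothesis p_neq0 : p <> 0.
Hypothesis c_gt0 : 0 < c.
Hypothesis g_ge1 : 1 <= g.

Definition Q (e Y : R) : R :=
  Y * Y * Y - 2 * p * (1 + 3 * g * e / 4) * Y * Y + (c * c + 3 * g * e * p * p) * Y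
  - 3 / 2 * p * c * c * e.

Definition Q_e (Y : R) : R := - 3 / 2 * g * p * Y * Y + 3 * g * p * p * Y - 3 / 2 * p * c * c.

Definition Q_slope (e Y1 Y2 : R) : R :=
  Y1 * Y1 + Y1 * Y2 + Y2 * Y2 - 2 * p * (1 + 3 * g * e / 4) * (Y1 + Y2)
  + c * c + 3 * g * e * p * p.

Lemma Q_shift e h Y : Q (e + h) Y = Q e Y + h * Q_e Y.
Proof. unfold Q, Q_e. field. Qed.

Lemma Q_sub e Y1 Y2 : Q e Y1 - Q e Y2 = (Y1 - Y2) * Q_slope e Y1 Y2.
Proof. unfold Q, Q_slope. field. Qed.

Lemma Q_at_0 e : Q e 0 = - (3 / 2 * p * c * c * e).
Proof. unfold Q. ring. Qed.

(* eta makes |p (Y1 + Y2)| <= c^2/16 for |Y1|, |Y2| <= eta; the bounds in eps0 give |g e| <= 1,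
   |3 g e p^2| <= c^2/8 and |3/2 p c^2 e| <= eta c^2/4. *)
Definition eta : R := c * c / (32 * Rabs p).

Definition eps0 : R := Rmin (Rmin (/ g) (c * c / (24 * g * (p * p)))) (eta / (6 * Rabs p)).

Lemma Rabs_p_gt0 : 0 < Rabs p.
Proof. apply Rabs_pos_lt. auto. Qed.

Lemma eta_gt0 : 0 < eta.
Proof. pose proof Rabs_p_gt0. unfold eta. apply Rdiv_lt_0_compat; nra. Qed.

Lemma eps0_gt0 : 0 < eps0.
Proof.
  pose proof Rabs_p_gt0. pose proof eta_gt0.
  unfold eps0. repeat apply Rmin_glb_lt.
  - apply Rinv_0_lt_compat. lra.
  - apply Rdiv_lt_0_compat; [nra |]. assert (0 < p * p) by nra. nra.
  - apply Rdiv_lt_0_compat; lra.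
Qed.

Lemma eps0_le_1 : eps0 <= 1.
Proof.
  unfold eps0. eapply Rle_trans; [apply Rmin_l |]. eapply Rle_trans; [apply Rmin_l |].
  rewrite <- Rinv_1. apply Rinv_le_contravar; lra.
Qed.

Lemma Rabs_le_eps0 e : Rabs e <= eps0 ->
  Rabs e <= / g /\ Rabs e <= c * c / (24 * g * (p * p)) /\ Rabs e <= eta / (6 * Rabs p).
Proof.
  unfold eps0. intros He.
  pose proof (Rmin_l (Rmin (/ g) (c * c / (24 * g * (p * p)))) (eta / (6 * Rabs p))).
  pose proof (Rmin_r (Rmin (/ g) (c * c / (24 * g * (p * p)))) (eta / (6 * Rabs p))).
  pose proof (Rmin_l (/ g) (c * c / (24 * g * (p * p)))).
  pose proof (Rmin_r (/ g) (c * c / (24 * g * (p * p)))).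
  repeat split; lra.
Qed.

Lemma Q_slope_ge e Y1 Y2 : Rabs e <= eps0 -> Rabs Y1 <= eta -> Rabs Y2 <= eta ->
  c * c / 2 <= Q_slope e Y1 Y2.
Proof.
  intros He H1 H2. destruct (Rabs_le_eps0 e He) as (Heg & Hepp & _).
  pose proof Rabs_p_gt0. assert (0 < p * p) by nra.
  assert (Hge : Rabs (g * e) <= 1).
  { rewrite Rabs_mult, (Rabs_pos_eq g) by lra.
    apply Rmult_le_compat_l with (r := g) in Heg; [| lra]. rewrite Rinv_r in Heg; lra. }
  assert (Hgepp : Rabs (3 * g * e * p * p) <= c * c / 8).
  { replace (3 * g * e * p * p) with ((3 * g * (p * p)) * e) by ring.
    rewrite Rabs_mult, (Rabs_pos_eq (3 * g * (p * p))) by nra.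
    apply Rmult_le_compat_l with (r := 3 * g * (p * p)) in Hepp; [| nra].
    eapply Rle_trans; [apply Hepp |]. right. field. split; nra. }
  assert (HpY : Rabs (p * (Y1 + Y2)) <= c * c / 16).
  { rewrite Rabs_mult. pose proof (Rabs_triang Y1 Y2).
    apply Rle_trans with (Rabs p * (2 * eta)); [apply Rmult_le_compat_l; lra |].
    right. unfold eta. field. lra. }
  apply Rabs_le_between in Hge, Hgepp, HpY.
  unfold Q_slope.
  replace (2 * p * (1 + 3 * g * e / 4) * (Y1 + Y2))
    with (2 * (1 + 3 * (g * e) / 4) * (p * (Y1 + Y2))) by field.
  assert (0 <= Y1 * Y1 + Y1 * Y2 + Y2 * Y2) by nra.
  nra.
Qed.

Lemma Q_slope_gt0 e Y1 Y2 : Rabs e <= eps0 -> Rabs Y1 <= eta -> Rabs Y2 <= eta ->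
  0 < Q_slope e Y1 Y2.
Proof. intros. pose proof (Q_slope_ge e Y1 Y2). nra. Qed.

Lemma Q_bracket e : Rabs e <= eps0 -> Q e (- eta) < 0 < Q e eta.
Proof.
  intros He. destruct (Rabs_le_eps0 e He) as (_ & _ & Hee).
  pose proof Rabs_p_gt0. pose proof eta_gt0.
  assert (Hrad : Rabs eta <= eta /\ Rabs (- eta) <= eta /\ Rabs 0 <= eta).
  { rewrite Rabs_Ropp, Rabs_R0, Rabs_pos_eq; lra. }
  assert (Hconst : Rabs (3 / 2 * p * c * c * e) <= eta * (c * c) / 4).
  { replace (3 / 2 * p * c * c * e) with ((3 / 2 * c * c) * (p * e)) by ring.
    rewrite Rabs_mult, (Rabs_mult p e), (Rabs_pos_eq (3 / 2 * c * c)) by nra.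
    apply Rmult_le_compat_l with (r := Rabs p) in Hee; [| lra].
    replace (Rabs p * (eta / (6 * Rabs p))) with (eta / 6) in Hee by (field; lra).
    nra. }
  apply Rabs_le_between in Hconst.
  pose proof (Q_sub e eta 0). pose proof (Q_sub e (- eta) 0). rewrite Q_at_0 in *.
  assert (eta * (c * c / 2) <= eta * Q_slope e eta 0).
  { apply Rmult_le_compat_l; [lra |]. apply Q_slope_ge; tauto. }
  assert (eta * (c * c / 2) <= eta * Q_slope e (- eta) 0).
  { apply Rmult_le_compat_l; [lra |]. apply Q_slope_ge; tauto. }
  assert (0 < eta * (c * c)) by (apply Rmult_lt_0_compat; nra).
  rewrite !Rminus_0_r in *. split; lra.
Qed.

Lemma small_root_exists e : Rabs e <= eps0 -> exists Y, Rabs Y <= eta /\ Q e Y = 0.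
Proof.
  intros He. destruct (Q_bracket e He) as [Hneg Hpos]. pose proof eta_gt0.
  destruct (IVT (Q e) (- eta) eta) as [Y [HY HQ]]; auto; try lra.
  - intros Y. unfold Q. reg.
  - exists Y. split; auto. apply Rabs_le. lra.
Qed.

(* Meaningful only for |e| <= eps0 (Y0_spec); elsewhere an arbitrary value. *)
Definition Y0 (e : R) : R := epsilon (inhabits 0) (fun Y => Rabs Y <= eta /\ Q e Y = 0).

Lemma Y0_spec e : Rabs e <= eps0 -> Rabs (Y0 e) <= eta /\ Q e (Y0 e) = 0.
Proof. intros He. unfold Y0. apply epsilon_spec, small_root_exists, He. Qed.

Lemma Y0_unique e Y : Rabs e <= eps0 -> Rabs Y <= eta -> Q e Y = 0 -> Y0 e = Y.
Proof.
  intros He HY HQ. destruct (Y0_spec e He) as [HY0 HQ0].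
  pose proof (Q_sub e (Y0 e) Y) as E. rewrite HQ0, HQ in E.
  pose proof (Q_slope_gt0 e (Y0 e) Y He HY0 HY).
  assert (Hz : (Y0 e - Y) * Q_slope e (Y0 e) Y = 0) by lra.
  apply Rmult_integral in Hz. destruct Hz; lra.
Qed.

Lemma Y0_at_0 : Y0 0 = 0.
Proof.
  pose proof eps0_gt0. pose proof eta_gt0.
  apply Y0_unique; rewrite ?Rabs_R0; try lra. unfold Q. ring.
Qed.

Lemma Y0_step e h : Rabs e <= eps0 -> Rabs (e + h) <= eps0 ->
  (Y0 (e + h) - Y0 e) * Q_slope (e + h) (Y0 (e + h)) (Y0 e) = - h * Q_e (Y0 e).
Proof.
  intros He Heh. rewrite <- Q_sub, (Q_shift e h (Y0 e)).
  rewrite (proj2 (Y0_spec e He)), (proj2 (Y0_spec (e + h) Heh)). ring.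
Qed.

Lemma Y0_lipschitz e h : Rabs e <= eps0 -> Rabs (e + h) <= eps0 ->
  Rabs (Y0 (e + h) - Y0 e) <= 2 * Rabs (Q_e (Y0 e)) / (c * c) * Rabs h.
Proof.
  intros He Heh. pose proof (Y0_step e h He Heh) as E.
  pose proof (Q_slope_ge _ _ _ Heh (proj1 (Y0_spec _ Heh)) (proj1 (Y0_spec _ He))) as HS.
  set (S := Q_slope (e + h) (Y0 (e + h)) (Y0 e)) in *.
  assert (Habs : Rabs (Y0 (e + h) - Y0 e) * S = Rabs h * Rabs (Q_e (Y0 e))).
  { rewrite <- (Rabs_pos_eq S) by nra. rewrite <- !Rabs_mult, E, <- Rabs_Ropp. f_equal. ring. }
  assert (Hcc : 0 < c * c) by nra.
  apply Rmult_le_reg_r with (c * c / 2); [lra |].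
  replace (2 * Rabs (Q_e (Y0 e)) / (c * c) * Rabs h * (c * c / 2))
    with (Rabs h * Rabs (Q_e (Y0 e))) by (field; lra).
  rewrite <- Habs. apply Rmult_le_compat_l; auto. apply Rabs_pos.
Qed.

Lemma Y0_derive e : Rabs e < eps0 ->
  is_derive Y0 e (- Q_e (Y0 e) / Q_slope e (Y0 e) (Y0 e)).
Proof.
  intros He.
  assert (Hnear : forall h, Rabs h < eps0 - Rabs e -> Rabs (e + h) <= eps0).
  { intros h Hh. pose proof (Rabs_triang e h). lra. }
  set (q h := - Q_e (Y0 e) / Q_slope (e + h) (Y0 (e + h)) (Y0 e)).
  replace (- Q_e (Y0 e) / Q_slope e (Y0 e) (Y0 e)) with (q 0)
    by (unfold q; rewrite Rplus_0_r; reflexivity).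
  apply is_derive_of_slope with (eps0 - Rabs e); [lra | |].
  - intros h Hh. pose proof (Hnear h Hh) as Heh.
    pose proof (Y0_step e h (Rlt_le _ _ He) Heh) as E.
    pose proof (Q_slope_gt0 _ _ _ Heh (proj1 (Y0_spec _ Heh)) (proj1 (Y0_spec e (Rlt_le _ _ He)))).
    apply Rmult_eq_reg_r with (Q_slope (e + h) (Y0 (e + h)) (Y0 e)); [| lra].
    unfold q. rewrite E. field. lra.
  - assert (HY : continuous (fun h => Y0 (e + h)) 0).
    { apply continuous_of_lipschitz with (2 * Rabs (Q_e (Y0 e)) / (c * c)) (eps0 - Rabs e);
        [lra |]. intros h Hh. apply Y0_lipschitz; auto. lra. }
    unfold q, Rdiv. apply (continuous_mult (K := R_AbsRing)); [apply continuous_const |].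
    apply continuous_Rinv_comp.
    + unfold Q_slope.
      repeat match goal with
      | |- continuous (fun _ => ?k) _ => apply continuous_const
      | |- continuous (fun x => x) _ => apply continuous_id
      | |- continuous (fun _ => Rplus _ _) _ => apply (continuous_plus (V := R_NormedModule))
      | |- continuous (fun _ => Rminus _ _) _ => apply (continuous_minus (V := R_NormedModule))
      | |- continuous (fun _ => Rmult _ _) _ => apply (continuous_mult (K := R_AbsRing))
      | |- continuous (fun _ => Rdiv _ _) _ => unfold Rdiv
      | |- continuous (Rplus ?u) ?z => change (continuous (fun x => Rplus u x) z)
      | |- continuous (Rmult ?u) ?z => change (continuous (fun x => Rmult u x) z)
      | _ => exact HY
      end.
    + rewrite Rplus_0_r. apply Rgt_not_eq, Q_slope_gt0; try apply Y0_spec; lra.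
Qed.

Lemma Y0_Cn_on n : Cn_on n Y0 (- eps0) eps0.
Proof.
  assert (Hin : forall x, - eps0 < x < eps0 -> Rabs x < eps0) by (intros; apply Rabs_def1; lra).
  induction n as [|n IH]; simpl; auto. split.
  - intros x Hx. eexists. apply Y0_derive; auto.
  - apply Cn_on_ext with (fun x => - Q_e (Y0 x) / Q_slope x (Y0 x) (Y0 x)).
    + intros x Hx. symmetry. apply is_derive_unique, Y0_derive; auto.
    + apply Cn_on_div.
      * intros x Hx. specialize (Hin x Hx).
        assert (Hx' : Rabs x <= eps0) by lra. apply Rgt_not_eq.
        apply Q_slope_gt0; auto; apply Y0_spec; auto.
      * unfold Q_e. Cn_on_close.
      * unfold Q_slope. Cn_on_close.
Qed.

Lemma Y0_mul_slope e : Rabs e <= eps0 -> Y0 e * Q_slope e (Y0 e) 0 = 3 / 2 * p * c * c * e.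
Proof.
  intros He. pose proof (Q_sub e (Y0 e) 0) as E.
  rewrite (proj2 (Y0_spec e He)), Q_at_0, Rminus_0_r in E. lra.
Qed.

Lemma Q_slope_at_root_ge e : 0 < e < eps0 -> c * c / 2 <= Q_slope e (Y0 e) 0.
Proof.
  intros He. assert (He' : Rabs e <= eps0) by (rewrite Rabs_pos_eq; lra).
  pose proof eta_gt0.
  apply Q_slope_ge; auto; [apply Y0_spec; auto | rewrite Rabs_R0; lra].
Qed.

Lemma Y0_bigO : bigO_on eps0 1 Y0.
Proof.
  apply bigO_on_ext with (fun e => (3 / 2 * p * c * c * e) * / Q_slope e (Y0 e) 0).
  - intros e He. pose proof (Q_slope_at_root_ge e He).
    rewrite <- Y0_mul_slope by (rewrite Rabs_pos_eq; lra). field. nra.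
  - apply (bigO_on_mult _ 1 0).
    + apply (bigO_on_mult _ 0 1); [apply bigO_on_const | apply bigO_on_id].
    + apply bigO_on_inv with (c * c / 2); [nra |].
      intros e He. pose proof (Q_slope_at_root_ge e He).
      rewrite Rabs_pos_eq; nra.
Qed.

Lemma Y0_expansion : bigO_on eps0 2 (fun e => Y0 e - 3 / 2 * p * e).
Proof.
  pose proof eps0_le_1 as Hle1.
  assert (HY0 : bigO_on eps0 0 Y0) by (apply bigO_on_S; auto; apply Y0_bigO).
  (* Y0 S = 3/2 p c^2 e with S = Q_slope e (Y0 e) 0 = c^2 + O(e). *)
  apply bigO_on_ext with (fun e =>
    (3 / 2 * p * e) * (- (Y0 e * (Y0 e - 2 * p * (1 + 3 * g * e / 4))) - e * (3 * g * p * p))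
    * / Q_slope e (Y0 e) 0).
  - intros e He. pose proof (Q_slope_at_root_ge e He).
    pose proof (Y0_mul_slope e) as E. rewrite Rabs_pos_eq in E by lra.
    apply Rmult_eq_reg_r with (Q_slope e (Y0 e) 0); [| nra].
    rewrite Rmult_assoc, Rinv_l, Rmult_1_r by nra.
    unfold Q_slope in *. rewrite Rmult_minus_distr_r, E by lra. ring.
  - apply (bigO_on_mult _ 2 0).
    + apply (bigO_on_mult _ 1 1).
      * apply (bigO_on_mult _ 0 1); [apply bigO_on_const | apply bigO_on_id].
      * apply bigO_on_minus.
        -- apply bigO_on_opp, (bigO_on_mult _ 1 0); [apply Y0_bigO | bigO0_close].
        -- apply (bigO_on_mult _ 1 0); [apply bigO_on_id | apply bigO_on_const].
    + apply bigO_on_inv with (c * c / 2); [nra |].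
      intros e He. pose proof (Q_slope_at_root_ge e He).
      rewrite Rabs_pos_eq; nra.
Qed.

Definition beta (e : R) : R := 2 * p * (1 + 3 * g * e / 4) - Y0 e.
Definition disc (e : R) : R := 4 * (c * c + 3 * g * e * p * p) - beta e * (beta e + 4 * Y0 e).
Definition disc_ratio (e : R) : R := disc e / (c * c - p * p).
Definition rho (e : R) : R := sqrt (disc_ratio e).
Definition rho1 : R := 3 / 2 * (g - 1) * p * p / (c * c - p * p).

Hypothesis kappa_neq0 : c * c - p * p <> 0.

Lemma disc_ratio_Cn_on n : Cn_on n disc_ratio (- eps0) eps0.
Proof.
  pose proof (Y0_Cn_on n). unfold disc_ratio, disc, beta. Cn_on_close.
Qed.

Lemma disc_ratio_at_0 : disc_ratio 0 = 4.
Proof. unfold disc_ratio, disc, beta. rewrite Y0_at_0. field. auto. Qed.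

Lemma disc_ratio_gt_3_near_0 : exists d, 0 < d /\ forall x, Rabs x < d -> 3 < disc_ratio x.
Proof.
  assert (Hder : ex_derive disc_ratio 0).
  { apply (proj1 (disc_ratio_Cn_on 1)). pose proof eps0_gt0. lra. }
  assert (Hcont : continuity_pt disc_ratio 0).
  { apply continuity_pt_filterlim.
    apply (ex_derive_continuous (K := R_AbsRing) (V := R_NormedModule)). auto. }
  destruct (Hcont 1 Rlt_0_1) as [d [Hd Hnear]].
  exists d. split; auto. intros x Hx.
  destruct (Req_dec x 0) as [-> | Hx0]; [rewrite disc_ratio_at_0; lra |].
  assert (Hdist : R_dist (disc_ratio x) (disc_ratio 0) < 1).
  { apply Hnear. split; [split; [exact I | auto] |].
    simpl. unfold R_dist. rewrite Rminus_0_r. auto. }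
  rewrite disc_ratio_at_0 in Hdist. unfold R_dist in Hdist.
  apply Rabs_def2 in Hdist. lra.
Qed.

Variable ck : C.
Hypothesis ck_sq : (ck * ck)%C = RtoC (c * c - p * p).

Definition Xm (e : R) : C := ((- Ci * RtoC (beta e) - ck * RtoC (rho e)) / 2)%C.
Definition X0 (e : R) : C := (- Ci * RtoC (Y0 e))%C.
Definition Xp (e : R) : C := ((- Ci * RtoC (beta e) + ck * RtoC (rho e)) / 2)%C.

Lemma ck_neq0 : ck <> 0%C.
Proof.
  intros E. rewrite E in ck_sq. apply (f_equal fst) in ck_sq. simpl in ck_sq.
  apply kappa_neq0. lra.
Qed.

Section Radius.

Variable delta : R.
Hypothesis delta_gt0 : 0 < delta.
Hypothesis delta_le_eps0 : delta <= eps0.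
Hypothesis disc_ratio_gt_3 : forall x, Rabs x < delta -> 3 < disc_ratio x.

Lemma delta_le_1 : delta <= 1.
Proof. pose proof eps0_le_1. lra. Qed.

Lemma Y0_Cn_on_delta n : Cn_on n Y0 (- delta) delta.
Proof. apply Cn_on_subinterval with (- eps0) eps0; try lra. apply Y0_Cn_on. Qed.

Lemma beta_Cn_on n : Cn_on n beta (- delta) delta.
Proof. pose proof (Y0_Cn_on_delta n). unfold beta. Cn_on_close. Qed.

Lemma rho_Cn_on n : Cn_on n rho (- delta) delta.
Proof.
  apply Cn_on_sqrt.
  - intros x Hx. assert (3 < disc_ratio x) by (apply disc_ratio_gt_3, Rabs_def1; lra). lra.
  - apply Cn_on_subinterval with (- eps0) eps0; try lra. apply disc_ratio_Cn_on.
Qed.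

Lemma Xm_smooth : Csmooth_on Xm (- delta) delta.
Proof.
  replace Xm with (fun e => (- Ci / 2) * RtoC (beta e) + (- ck / 2) * RtoC (rho e))%C.
  - apply Csmooth_on_comb; [apply beta_Cn_on | apply rho_Cn_on].
  - apply functional_extensionality. intros e. unfold Xm. field.
Qed.

Lemma X0_smooth : Csmooth_on X0 (- delta) delta.
Proof.
  replace X0 with (fun e => (- Ci) * RtoC (Y0 e) + 0 * RtoC (Y0 e))%C.
  - apply Csmooth_on_comb; apply Y0_Cn_on_delta.
  - apply functional_extensionality. intros e. unfold X0. ring.
Qed.

Lemma Xp_smooth : Csmooth_on Xp (- delta) delta.
Proof.
  replace Xp with (fun e => (- Ci / 2) * RtoC (beta e) + (ck / 2) * RtoC (rho e))%C.
  - apply Csmooth_on_comb; [apply beta_Cn_on | apply rho_Cn_on].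
  - apply functional_extensionality. intros e. unfold Xp. field.
Qed.

Lemma rho_sq e : Rabs e < delta -> rho e * rho e = disc_ratio e /\ 0 <= rho e.
Proof.
  intros He. pose proof (disc_ratio_gt_3 e He).
  unfold rho. split; [apply sqrt_sqrt; lra | apply sqrt_pos].
Qed.

Lemma Pdisp_factor k a1 e X : k * a1 = p -> 0 < e < delta ->
  Pdisp k a1 c g (/ e) X = ((X - Xm e) * (X - X0 e) * (X - Xp e))%C.
Proof.
  intros Hka He. assert (He' : Rabs e < delta) by (rewrite Rabs_pos_eq; lra).
  rewrite Pdisp_inv, Hka by lra.
  replace (2 * p * (1 + 3 * g * e / 4)) with (beta e + Y0 e) by (unfold beta; ring).
  apply cubic_factor.
  - destruct (rho_sq e He') as [Hrho _].
    replace (ck * RtoC (rho e) * (ck * RtoC (rho e)))%C with (ck * ck * RtoC (rho e * rho e))%C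
      by (rewrite RtoC_mult; ring).
    rewrite ck_sq, Hrho, <- RtoC_mult. f_equal. unfold disc_ratio, disc. field. auto.
  - assert (HQ : Q e (Y0 e) = 0) by (apply Y0_spec; lra).
    unfold Q in HQ. unfold beta. lra.
Qed.

Lemma Y0_expansion_delta : bigO_on delta 2 (fun e => Y0 e - 3 / 2 * p * e).
Proof. apply bigO_on_le with eps0; auto. apply Y0_expansion. Qed.

Lemma disc_ratio_expansion : bigO_on delta 2 (fun e => disc_ratio e - 4 - 4 * rho1 * e).
Proof.
  pose proof delta_le_1.
  assert (HZ0 : bigO_on delta 0 (fun e => Y0 e - 3 / 2 * p * e))
    by (apply bigO_on_S, bigO_on_S, Y0_expansion_delta; auto).
  apply bigO_on_ext with (fun e =>
    ((Y0 e - 3 / 2 * p * e) * (- 4 * p + 3 * (3 - g) * p * e + 3 * (Y0 e - 3 / 2 * p * e))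
     - e * e * (9 / 4 * (g - 1) * (g - 1) * p * p + 9 * (g - 1) * p * p))
    * / (c * c - p * p)).
  - intros e _. unfold disc_ratio, disc, beta, rho1. field. auto.
  - apply (bigO_on_mult _ 2 0); [| apply bigO_on_const].
    apply bigO_on_minus.
    + apply (bigO_on_mult _ 2 0); [apply Y0_expansion_delta | bigO0_close].
    + apply (bigO_on_mult _ 2 0); [apply (bigO_on_mult _ 1 1); apply bigO_on_id | apply bigO_on_const].
Qed.

Lemma rho_expansion : bigO_on delta 2 (fun e => rho e - 2 - rho1 * e).
Proof.
  pose proof delta_le_1.
  assert (Hinv : bigO_on delta 0 (fun e => / (rho e + 2))).
  { apply bigO_on_inv with 2; [lra |]. intros e He.
    destruct (rho_sq e) as [_ Hpos]; [rewrite Rabs_pos_eq; lra |].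
    rewrite Rabs_pos_eq; lra. }
  assert (Hu : bigO_on delta 1 (fun e => disc_ratio e - 4)).
  { apply bigO_on_ext with (fun e => (disc_ratio e - 4 - 4 * rho1 * e) + (4 * rho1) * e).
    - intros e _. ring.
    - apply bigO_on_plus; [apply bigO_on_S; auto; apply disc_ratio_expansion |].
      apply (bigO_on_mult _ 0 1); [apply bigO_on_const | apply bigO_on_id]. }
  (* sqrt u - 2 = (u - 4) / (sqrt u + 2), used twice. *)
  apply bigO_on_ext with (fun e =>
    ((disc_ratio e - 4 - 4 * rho1 * e) - rho1 * e * (disc_ratio e - 4) * / (rho e + 2))
    * / (rho e + 2)).
  - intros e He. destruct (rho_sq e) as [Hsq Hpos]; [rewrite Rabs_pos_eq; lra |].
    rewrite <- Hsq. field. lra.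
  - apply (bigO_on_mult _ 2 0); auto. apply bigO_on_minus; [apply disc_ratio_expansion |].
    apply (bigO_on_mult _ 2 0); auto. apply (bigO_on_mult _ 1 1); auto.
    apply (bigO_on_mult _ 0 1); [apply bigO_on_const | apply bigO_on_id].
Qed.

Lemma RtoC_rho_error e : RtoC (rho e - 2 - rho1 * e) =
  (RtoC (rho e) - 2 - 3 / 2 * (RtoC g - 1) * RtoC p * RtoC p / (ck * ck) * RtoC e)%C.
Proof.
  rewrite ck_sq. unfold rho1. apply injective_projections; simpl; field; auto.
Qed.

Lemma roots_expansion k a1 : k * a1 = p -> exists M, forall e, 0 < e < delta ->
  Cmod (Xm e - (- Ci * RtoC k * RtoC a1 - ck
         - 3 * (RtoC g - 1) * RtoC k * RtoC a1 * (RtoC k * RtoC a1 + Ci * ck)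
           / (4 * ck) * RtoC e))%C <= M * e ^ 2 /\
  Cmod (X0 e - (- Ci * (3 * RtoC k * RtoC a1 / 2) * RtoC e))%C <= M * e ^ 2 /\
  Cmod (Xp e - (- Ci * RtoC k * RtoC a1 + ck
         + 3 * (RtoC g - 1) * RtoC k * RtoC a1 * (RtoC k * RtoC a1 - Ci * ck)
           / (4 * ck) * RtoC e))%C <= M * e ^ 2.
Proof.
  intros Hka.
  pose proof ck_neq0.
  assert (Hbeta : forall e, RtoC (beta e) = (2 * RtoC k * RtoC a1 * (1 + 3 * RtoC g * RtoC e / 4) - RtoC (Y0 e))%C).
  { intros e. unfold beta. rewrite <- Hka. apply injective_projections; simpl; field. }
  assert (HZ : forall e, RtoC (Y0 e - 3 / 2 * p * e) = (RtoC (Y0 e) - 3 / 2 * RtoC k * RtoC a1 * RtoC e)%C).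
  { intros e. rewrite <- Hka. apply injective_projections; simpl; field. }
  destruct (bigO_on_common delta 2
    (fun e => Cmod ((Ci / 2) * RtoC (Y0 e - 3 / 2 * p * e) + (- ck / 2) * RtoC (rho e - 2 - rho1 * e)))
    (fun e => Cmod ((- Ci) * RtoC (Y0 e - 3 / 2 * p * e) + 0 * RtoC (rho e - 2 - rho1 * e)))
    (fun e => Cmod ((Ci / 2) * RtoC (Y0 e - 3 / 2 * p * e) + (ck / 2) * RtoC (rho e - 2 - rho1 * e))))
    as [M HM]; try (apply bigO_on_Cmod_comb; [apply Y0_expansion_delta | apply rho_expansion]).
  exists M. intros e He. destruct (HM e He) as (Hm & H0 & Hp).
  rewrite Rabs_pos_eq in Hm, H0, Hp by apply Cmod_ge_0.
  rewrite HZ, RtoC_rho_error, <- Hka, RtoC_mult in Hm, H0, Hp.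
  unfold Xm, X0, Xp. rewrite !Hbeta.
  split; [| split].
  - eapply Rle_trans; [| exact Hm]. right. f_equal. field. auto.
  - eapply Rle_trans; [| exact H0]. right. f_equal. field. auto.
  - eapply Rle_trans; [| exact Hp]. right. f_equal. field. auto.
Qed.

End Radius.

End Dispersion.

Open Scope C_scope.

Theorem proposition1 (k a1 c gamma : R) (ck : C) :
  (0 < a1)%R -> (0 < c)%R -> (1 <= gamma)%R -> k <> 0%R ->
  (c ^ 2 <> k ^ 2 * a1 ^ 2)%R ->
  ck * ck = RtoC (c ^ 2 - k ^ 2 * a1 ^ 2) ->
  exists (delta : R) (Xm X0 Xp : R -> C),
    (0 < delta)%R /\
    Csmooth_on Xm (- delta) delta /\
    Csmooth_on X0 (- delta) delta /\
    Csmooth_on Xp (- delta) delta /\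
    (* for every Pr > 1/delta, the three roots (with multiplicity) of P
       are Xm (1/Pr), X0 (1/Pr), Xp (1/Pr) *)
    (forall eps : R, (0 < eps < delta)%R ->
       forall X : C,
         Pdisp k a1 c gamma (/ eps) X = (X - Xm eps) * (X - X0 eps) * (X - Xp eps)) /\
    (* asymptotic expansions with O(1/Pr^2) remainders *)
    (exists M : R, forall eps : R, (0 < eps < delta)%R ->
       (Cmod (Xm eps - (- Ci * RtoC k * RtoC a1 - ck
              - 3 * (RtoC gamma - 1) * RtoC k * RtoC a1 * (RtoC k * RtoC a1 + Ci * ck)
                / (4 * ck) * RtoC eps)) <= M * eps ^ 2)%R /\
       (Cmod (X0 eps - (- Ci * (3 * RtoC k * RtoC a1 / 2) * RtoC eps)) <= M * eps ^ 2)%R /\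
       (Cmod (Xp eps - (- Ci * RtoC k * RtoC a1 + ck
              + 3 * (RtoC gamma - 1) * RtoC k * RtoC a1 * (RtoC k * RtoC a1 - Ci * ck)
                / (4 * ck) * RtoC eps)) <= M * eps ^ 2)%R).
Proof.
  intros Ha1 Hc Hg Hk Hc2 Hck.
  set (p := (k * a1)%R).
  assert (Hp : p <> 0%R) by (apply Rmult_integral_contrapositive; split; lra).
  assert (Hkappa : (c * c - p * p <> 0)%R).
  { contradict Hc2. replace (k ^ 2 * a1 ^ 2)%R with (p * p)%R by (unfold p; ring).
    replace (c ^ 2)%R with (c * c)%R by ring. lra. }
  assert (Hck' : ck * ck = RtoC (c * c - p * p)) by (rewrite Hck; f_equal; unfold p; ring).
  destruct (disc_ratio_gt_3_near_0 p c gamma Hp Hc Hg Hkappa) as (d & Hd & Hgt3).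
  set (delta := Rmin (eps0 p c gamma) d).
  assert (Hdelta : (0 < delta)%R) by (apply Rmin_glb_lt; auto; apply eps0_gt0; auto).
  assert (Hle : (delta <= eps0 p c gamma)%R) by apply Rmin_l.
  assert (Hgt3' : forall x, (Rabs x < delta -> 3 < disc_ratio p c gamma x)%R).
  { intros x Hx. apply Hgt3, Rlt_le_trans with delta; auto. apply Rmin_r. }
  exists delta, (Xm p c gamma ck), (X0 p c gamma), (Xp p c gamma ck).
  split; [exact Hdelta |].
  split; [apply Xm_smooth; auto |].
  split; [apply X0_smooth; auto |].
  split; [apply Xp_smooth; auto |].
  split.
  - intros eps Heps X. apply Pdisp_factor with (delta := delta); auto.
  - apply roots_expansion with (delta := delta); auto.
Qed.
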